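(* Let $n\ge1$ and let $Q_1$ be a Kazhdan subset of $\mathbb R^{2n}=\mathbb R^n\times\mathbb R^n$, whose elements are written $(\mathbf q,\mathbf p)$. Then $\sup\{|\mathbf p|:(\mathbf q,\mathbf p)\in Q_1\}=+\infty$, where $|\mathbf p|$ is the Euclidean norm of $\mathbf p$.
   Context: A subset $Q$ is a Kazhdan set in $\mathbb R^{2n}$ (additive group, usual topology) if there exists $\varepsilon>0$ such that every strongly continuous unitary representation $\pi$ of $\mathbb R^{2n}$ on a complex Hilbert space having a vector $x$ with $\sup_{g\in Q}\|\pi(g)x-x\|<\varepsilon\|x\|$ has a non-zero invariant vector. *)

From Stdlib Require Fin.
From Stdlib Require Import Reals.
Open Scope R_scope.

Definition Vec (n : nat) : Type := Fin.t n -> R.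

Fixpoint sumFin (n : nat) : (Fin.t n -> R) -> R :=
  match n return (Fin.t n -> R) -> R with
  | O => fun _ => 0
  | S m => fun f => f Fin.F1 + sumFin m (fun i => f (Fin.FS i))
  end.

Definition vnorm {n : nat} (v : Vec n) : R := sqrt (sumFin n (fun i => v i * v i)).

(* The group R^{2n} = R^n x R^n, elements (q, p) *)
Definition G2n (n : nat) : Type := (Vec n * Vec n)%type.
Definition gadd {n : nat} (g h : G2n n) : G2n n :=
  (fun i => fst g i + fst h i, fun i => snd g i + snd h i).
Definition gzero (n : nat) : G2n n := (fun _ => 0, fun _ => 0).
Definition gsub {n : nat} (g h : G2n n) : G2n n :=
  (fun i => fst g i - fst h i, fun i => snd g i - snd h i).
Definition gnorm {n : nat} (g : G2n n) : R :=
  sqrt (sumFin n (fun i => fst g i * fst g i) + sumFin n (fun i => snd g i * snd g i)).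

Definition C : Type := (R * R)%type.
Definition C0 : C := (0, 0).
Definition C1 : C := (1, 0).
Definition Cadd (a b : C) : C := (fst a + fst b, snd a + snd b).
Definition Cmul (a b : C) : C :=
  (fst a * fst b - snd a * snd b, fst a * snd b + snd a * fst b).
Definition Cconj (a : C) : C := (fst a, - snd a).

Record HilbertSpace : Type := {
  hcar :> Type;
  hzero : hcar;
  hadd : hcar -> hcar -> hcar;
  hopp : hcar -> hcar;
  hscal : C -> hcar -> hcar;
  hinner : hcar -> hcar -> C;
  hadd_assoc : forall x y z, hadd x (hadd y z) = hadd (hadd x y) z;
  hadd_comm : forall x y, hadd x y = hadd y x;
  hadd_zero : forall x, hadd x hzero = x;
  hadd_opp : forall x, hadd x (hopp x) = hzero;
  hscal_one : forall x, hscal C1 x = x;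
  hscal_mul : forall a b x, hscal (Cmul a b) x = hscal a (hscal b x);
  hscal_addv : forall a x y, hscal a (hadd x y) = hadd (hscal a x) (hscal a y);
  hscal_adds : forall a b x, hscal (Cadd a b) x = hadd (hscal a x) (hscal b x);
  hinner_add : forall x y z, hinner (hadd x y) z = Cadd (hinner x z) (hinner y z);
  hinner_scal : forall a x y, hinner (hscal a x) y = Cmul a (hinner x y);
  hinner_conj : forall x y, hinner y x = Cconj (hinner x y);
  hinner_pos : forall x, 0 <= fst (hinner x x);
  hinner_def : forall x, hinner x x = C0 -> x = hzero;
  hcomplete : forall u : nat -> hcar,
    (forall eps, 0 < eps -> exists N, forall m k, (N <= m)%nat -> (N <= k)%nat ->
        sqrt (fst (hinner (hadd (u m) (hopp (u k))) (hadd (u m) (hopp (u k))))) < eps) ->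
    exists l, forall eps, 0 < eps -> exists N, forall m, (N <= m)%nat ->
        sqrt (fst (hinner (hadd (u m) (hopp l)) (hadd (u m) (hopp l)))) < eps
}.

Definition hnorm {H : HilbertSpace} (x : H) : R := sqrt (fst (hinner H x x)).
Definition hsub {H : HilbertSpace} (x y : H) : H := hadd H x (hopp H y).

Definition is_unitary_rep (n : nat) (H : HilbertSpace) (pi : G2n n -> H -> H) : Prop :=
  (forall g x y, pi g (hadd H x y) = hadd H (pi g x) (pi g y)) /\
  (forall g a x, pi g (hscal H a x) = hscal H a (pi g x)) /\
  (forall g x y, hinner H (pi g x) (pi g y) = hinner H x y) /\
  (* homomorphism property (hence each pi g is invertible, pi (-g) = pi g ^-1) *)
  (forall x, pi (gzero n) x = x) /\
  (forall g h x, pi (gadd g h) x = pi g (pi h x)) /\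
  (forall x g eps, 0 < eps -> exists delta, 0 < delta /\
      forall h, gnorm (gsub h g) < delta -> hnorm (hsub (pi h x) (pi g x)) < eps).

(* "sup_{g in Q} ||pi g x - x|| < eps ||x||" is expressed as: some bound c < eps ||x||
   dominates all ||pi g x - x||, g in Q. *)
Definition Kazhdan_set (n : nat) (Q : G2n n -> Prop) : Prop :=
  exists eps, 0 < eps /\
    forall (H : HilbertSpace) (pi : G2n n -> H -> H),
      is_unitary_rep n H pi ->
      forall x : H,
        (exists c, c < eps * hnorm x /\ forall g, Q g -> hnorm (hsub (pi g x) x) <= c) ->
        exists v : H, v <> hzero H /\ forall g, pi g v = v.

(* If the momenta p of Q1 were bounded by M, the one-dimensional unitary
   character (q, p) |-> exp (i a p_1) of R^{2n}, with a small enough that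
   a M is below the Kazhdan constant, would move the unit vector 1 uniformly
   less than required on Q1; yet it has no nonzero invariant vector, since
   the element (0, (pi/a, 0, ..., 0)) acts by -1. *)

From Pilot Require Import Defs.
From Stdlib Require Import Reals Lra Lia Psatz Classical.
Open Scope R_scope.

Definition Copp (x : Defs.C) : Defs.C := (- fst x, - snd x).
Definition Cnorm2 (z : Defs.C) : R := fst z * fst z + snd z * snd z.

Lemma Cnorm2_ge0 z : 0 <= Cnorm2 z.
Proof. unfold Cnorm2; nra. Qed.

Lemma Cnorm2_mul u x : Cnorm2 (Cmul u x) = Cnorm2 u * Cnorm2 x.
Proof. destruct u, x; unfold Cnorm2, Cmul; simpl; ring. Qed.

Lemma Cmul_conj_fst z : fst (Cmul z (Cconj z)) = Cnorm2 z.
Proof. destruct z; unfold Cmul, Cconj, Cnorm2; simpl; ring. Qed.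

Lemma Cmul_conj_mul u x y :
  Cmul (Cmul u x) (Cconj (Cmul u y)) = Cmul (Cmul u (Cconj u)) (Cmul x (Cconj y)).
Proof. destruct u, x, y; unfold Cmul, Cconj; simpl; f_equal; ring. Qed.

Lemma Rabs_le_sqrt_sum_sq a b : Rabs a <= sqrt (a * a + b * b).
Proof. rewrite <- sqrt_Rsqr_abs. apply sqrt_le_1_alt. unfold Rsqr. nra. Qed.

Lemma sqrt_sum_sq_le_Rabs a b : sqrt (a * a + b * b) <= Rabs a + Rabs b.
Proof.
  pose proof (Rabs_pos a); pose proof (Rabs_pos b).
  rewrite <- (sqrt_Rsqr (Rabs a + Rabs b)) by lra. apply sqrt_le_1_alt.
  pose proof (Rsqr_abs a); pose proof (Rsqr_abs b). unfold Rsqr in *. nra.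
Qed.

Lemma Cnorm2_sub x y :
  Cnorm2 (Cadd x (Copp y)) = (fst x - fst y) * (fst x - fst y) + (snd x - snd y) * (snd x - snd y).
Proof. destruct x, y; unfold Cnorm2, Cadd, Copp; simpl; ring. Qed.

Lemma C_complete (u : nat -> Defs.C) :
  (forall eps, 0 < eps -> exists N, forall m k, (N <= m)%nat -> (N <= k)%nat ->
      sqrt (fst (Cmul (Cadd (u m) (Copp (u k))) (Cconj (Cadd (u m) (Copp (u k)))))) < eps) ->
  exists l, forall eps, 0 < eps -> exists N, forall m, (N <= m)%nat ->
      sqrt (fst (Cmul (Cadd (u m) (Copp l)) (Cconj (Cadd (u m) (Copp l))))) < eps.
Proof.
  intros Hc.
  assert (Cfst : Cauchy_crit (fun m => fst (u m))).
  { intros e He; destruct (Hc e He) as [N HN]; exists N; intros m k Hm Hk; unfold R_dist.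
    eapply Rle_lt_trans; [|apply (HN m k Hm Hk)].
    rewrite Cmul_conj_fst, Cnorm2_sub. apply Rabs_le_sqrt_sum_sq. }
  assert (Csnd : Cauchy_crit (fun m => snd (u m))).
  { intros e He; destruct (Hc e He) as [N HN]; exists N; intros m k Hm Hk; unfold R_dist.
    eapply Rle_lt_trans; [|apply (HN m k Hm Hk)].
    rewrite Cmul_conj_fst, Cnorm2_sub, Rplus_comm. apply Rabs_le_sqrt_sum_sq. }
  destruct (R_complete _ Cfst) as [l1 H1], (R_complete _ Csnd) as [l2 H2].
  exists (l1, l2). intros e He.
  destruct (H1 (e / 2)) as [N1 HN1]; [lra|]. destruct (H2 (e / 2)) as [N2 HN2]; [lra|].
  exists (max N1 N2). intros m Hm. rewrite Cmul_conj_fst, Cnorm2_sub. simpl.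
  eapply Rle_lt_trans; [apply sqrt_sum_sq_le_Rabs|].
  specialize (HN1 m ltac:(lia)). specialize (HN2 m ltac:(lia)).
  unfold R_dist in *. lra.
Qed.

Definition C_hilbert : HilbertSpace.
Proof.
  refine {| hcar := Defs.C; hzero := Defs.C0; hadd := Cadd; hopp := Copp; hscal := Cmul;
            hinner := fun x y => Cmul x (Cconj y); hcomplete := C_complete |}.
  all: unfold Cmul, Cadd, Copp, Cconj, Defs.C0, Defs.C1.
  (* obligations 12 and 13 are positivity and definiteness of the inner product *)
  12: intros []; simpl; nra.
  12: intros [a b]; simpl; intros E; injection E as E1 E2; f_equal; nra.
  all: intros; repeat match goal with z : Defs.C |- _ => destruct z end;
       simpl; f_equal; ring.
Defined.

Lemma hnorm_C_hilbert (z : Defs.C) : @hnorm C_hilbert z = sqrt (Cnorm2 z).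
Proof. unfold hnorm; cbn [hinner C_hilbert]; now rewrite Cmul_conj_fst. Qed.

Lemma hnorm_C1 : @hnorm C_hilbert Defs.C1 = 1.
Proof.
  rewrite hnorm_C_hilbert. unfold Cnorm2, Defs.C1; simpl.
  replace (1 * 1 + 0 * 0) with 1 by ring. exact sqrt_1.
Qed.

Definition expi (t : R) : Defs.C := (cos t, sin t).

Lemma expi_0 : expi 0 = Defs.C1.
Proof. unfold expi, Defs.C1. now rewrite cos_0, sin_0. Qed.

Lemma expi_add s t : expi (s + t) = Cmul (expi s) (expi t).
Proof. unfold expi, Cmul; simpl. rewrite cos_plus, sin_plus. f_equal; ring. Qed.

Lemma expi_mul_conj t : Cmul (expi t) (Cconj (expi t)) = Defs.C1.
Proof.
  unfold expi, Cmul, Cconj, Defs.C1; simpl. pose proof (sin2_cos2 t). unfold Rsqr in *.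
  f_equal; lra.
Qed.

Lemma sin_sqr_le y : sin y * sin y <= y * y.
Proof.
  assert (Hpos : forall z, 0 < z -> sin z * sin z <= z * z).
  { intros z Hz. pose proof (sin_lt_x z Hz). pose proof (SIN_bound z).
    destruct (Rle_dec z PI).
    - pose proof (sin_ge_0 z ltac:(lra) r). nra.
    - pose proof PI2_1. pose proof PI2_Rlt_PI. nra. }
  destruct (Rtotal_order y 0) as [H|[H|H]].
  - specialize (Hpos (- y) ltac:(lra)). rewrite sin_neg in Hpos. nra.
  - subst; rewrite sin_0; lra.
  - auto.
Qed.

(* |e^{is} - e^{it}|^2 = 2 - 2 cos (s - t) = 4 sin^2 ((s - t)/2). *)
Lemma expi_dist s t : sqrt (Cnorm2 (Cadd (expi s) (Copp (expi t)))) <= Rabs (s - t).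
Proof.
  rewrite <- sqrt_Rsqr_abs. apply sqrt_le_1_alt. unfold Rsqr.
  assert (E : Cnorm2 (Cadd (expi s) (Copp (expi t))) = 2 - 2 * cos (s - t)).
  { rewrite Cnorm2_sub; unfold expi; simpl. rewrite cos_minus.
    pose proof (sin2_cos2 s); pose proof (sin2_cos2 t). unfold Rsqr in *. nra. }
  rewrite E. replace (s - t) with (2 * ((s - t) / 2)) by field.
  rewrite cos_2a_sin. pose proof (sin_sqr_le ((s - t) / 2)). nra.
Qed.

Lemma expi_mul_dist s t x :
  @hnorm C_hilbert (@hsub C_hilbert (Cmul (expi s) x) (Cmul (expi t) x))
  <= Rabs (s - t) * sqrt (Cnorm2 x).
Proof.
  unfold hsub; simpl. rewrite hnorm_C_hilbert.
  replace (Cadd (Cmul (expi s) x) (Copp (Cmul (expi t) x)))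
    with (Cmul (Cadd (expi s) (Copp (expi t))) x)
    by (destruct x; unfold Cmul, Cadd, Copp; simpl; f_equal; ring).
  rewrite Cnorm2_mul, sqrt_mult by apply Cnorm2_ge0.
  apply Rmult_le_compat_r; [apply sqrt_pos | apply expi_dist].
Qed.

Lemma sumFin_ge0 n (f : Fin.t n -> R) : (forall i, 0 <= f i) -> 0 <= sumFin n f.
Proof.
  revert f; induction n; intros f Hf; simpl; [lra|].
  pose proof (Hf Fin.F1). pose proof (IHn (fun i => f (Fin.FS i)) (fun i => Hf _)). lra.
Qed.

(* Junk value 0 on R^0. *)
Definition vhead {n : nat} : Vec n -> R :=
  match n return Vec n -> R with O => fun _ => 0 | S m => fun v => v Fin.F1 end.

Lemma Rabs_vhead_le_vnorm n (v : Vec n) : Rabs (vhead v) <= vnorm v.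
Proof.
  destruct n; simpl; unfold vnorm.
  - rewrite Rabs_R0; apply sqrt_pos.
  - simpl. rewrite <- sqrt_Rsqr_abs. apply sqrt_le_1_alt. unfold Rsqr.
    pose proof (sumFin_ge0 n (fun i => v (Fin.FS i) * v (Fin.FS i)) (fun i => ltac:(nra))).
    lra.
Qed.

Lemma Rabs_vhead_le_gnorm n (g : G2n n) : Rabs (vhead (snd g)) <= gnorm g.
Proof.
  destruct n; simpl; unfold gnorm.
  - rewrite Rabs_R0; apply sqrt_pos.
  - simpl. rewrite <- sqrt_Rsqr_abs. apply sqrt_le_1_alt. unfold Rsqr.
    pose proof (sumFin_ge0 n (fun i => snd g (Fin.FS i) * snd g (Fin.FS i)) (fun i => ltac:(nra))).
    pose proof (sumFin_ge0 n (fun i => fst g (Fin.FS i) * fst g (Fin.FS i)) (fun i => ltac:(nra))).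
    pose proof (Rle_0_sqr (fst g Fin.F1)). unfold Rsqr in *. lra.
Qed.

Lemma vhead_gsub n (g h : G2n n) : vhead (snd (gsub h g)) = vhead (snd h) - vhead (snd g).
Proof. destruct n; simpl; ring. Qed.

Lemma vhead_gadd n (g h : G2n n) : vhead (snd (gadd g h)) = vhead (snd g) + vhead (snd h).
Proof. destruct n; simpl; ring. Qed.

Lemma vhead_gzero n : vhead (snd (gzero n)) = 0.
Proof. now destruct n. Qed.

Definition char_rep (a : R) {n : nat} (g : G2n n) (x : Defs.C) : Defs.C :=
  Cmul (expi (a * vhead (snd g))) x.

Lemma char_rep_continuous a n (x : Defs.C) (g : G2n n) eps :
  0 < eps -> exists delta, 0 < delta /\ forall h, gnorm (gsub h g) < delta ->
    @hnorm C_hilbert (@hsub C_hilbert (char_rep a h x) (char_rep a g x)) < eps.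
Proof.
  intros Heps. pose proof (sqrt_pos (Cnorm2 x)). set (r := sqrt (Cnorm2 x)) in *.
  exists (eps / ((Rabs a + 1) * (r + 1))). split.
  { apply Rdiv_lt_0_compat; pose proof (Rabs_pos a); nra. }
  intros h Hh. eapply Rle_lt_trans; [apply expi_mul_dist|]. fold r.
  rewrite <- Rmult_minus_distr_l, <- vhead_gsub, Rabs_mult.
  pose proof (Rabs_vhead_le_gnorm n (gsub h g)).
  pose proof (Rabs_pos a); pose proof (Rabs_pos (vhead (snd (gsub h g)))).
  assert (Hd : (Rabs a + 1) * (r + 1) * gnorm (gsub h g) < eps).
  { apply Rmult_lt_compat_l with (r := (Rabs a + 1) * (r + 1)) in Hh; [|nra].
    replace ((Rabs a + 1) * (r + 1) * (eps / ((Rabs a + 1) * (r + 1)))) with eps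
      in Hh by (field; nra).
    exact Hh. }
  apply Rle_lt_trans with ((Rabs a + 1) * (r + 1) * gnorm (gsub h g)); [|exact Hd].
  replace ((Rabs a + 1) * (r + 1) * gnorm (gsub h g))
    with ((Rabs a + 1) * gnorm (gsub h g) * (r + 1)) by ring.
  apply Rmult_le_compat; [nra | lra | apply Rmult_le_compat; lra | lra].
Qed.

Lemma char_rep_unitary a n : is_unitary_rep n C_hilbert (@char_rep a n).
Proof.
  unfold is_unitary_rep; repeat split; cbn; unfold char_rep.
  - intros g [] []; unfold Cmul, Cadd; simpl; f_equal; ring.
  - intros g [] []; unfold Cmul; simpl; f_equal; ring.
  - intros g x y. rewrite Cmul_conj_mul, expi_mul_conj.
    destruct (Cmul x (Cconj y)); unfold Cmul, Defs.C1; simpl; f_equal; ring.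
  - intros []. rewrite vhead_gzero, Rmult_0_r, expi_0. unfold Cmul, Defs.C1; simpl; f_equal; ring.
  - intros g h []. rewrite vhead_gadd, Rmult_plus_distr_l, expi_add.
    unfold Cmul; simpl; f_equal; ring.
  - intros x g eps. apply char_rep_continuous.
Qed.

Lemma char_rep_move_C1 a n (g : G2n n) :
  @hnorm C_hilbert (@hsub C_hilbert (char_rep a g Defs.C1) Defs.C1) <= Rabs a * vnorm (snd g).
Proof.
  unfold char_rep. rewrite <- expi_0 at 2. replace (expi 0) with (Cmul (expi 0) Defs.C1)
    by (rewrite expi_0; unfold Cmul, Defs.C1; simpl; f_equal; ring).
  eapply Rle_trans; [apply expi_mul_dist|].
  rewrite <- hnorm_C_hilbert, hnorm_C1, Rmult_1_r, Rminus_0_r, Rabs_mult.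
  apply Rmult_le_compat_l; [apply Rabs_pos | apply Rabs_vhead_le_vnorm].
Qed.

(* The element with p = (pi/a, 0, ..., 0) acts as multiplication by -1. *)
Lemma char_rep_invariant_eq0 a m (v : Defs.C) :
  a <> 0 -> (forall g : G2n (S m), char_rep a g v = v) -> v = Defs.C0.
Proof.
  intros Ha Hinv. specialize (Hinv (fun _ => 0, fun _ => PI / a)).
  unfold char_rep in Hinv; simpl in Hinv.
  replace (a * (PI / a)) with PI in Hinv by (field; exact Ha).
  unfold expi, Cmul in Hinv. rewrite cos_PI, sin_PI in Hinv.
  destruct v as [v1 v2]. simpl in Hinv. injection Hinv as H1 H2.
  unfold Defs.C0. f_equal; lra.
Qed.

Theorem lemmaG (n : nat) (Hn : (1 <= n)%nat) (Q1 : G2n n -> Prop) :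
  Kazhdan_set n Q1 ->
  forall M : R, exists qp : G2n n, Q1 qp /\ M < vnorm (snd qp).
Proof.
  intros [eps [Heps HK]] M. apply NNPP; intro Hno.
  assert (Hbounded : forall qp, Q1 qp -> vnorm (snd qp) <= M).
  { intros qp Hq. apply Rnot_lt_le; intro; apply Hno; eauto. }
  set (a := eps / (2 * (Rabs M + 1))).
  pose proof (Rabs_pos M).
  assert (Ha : 0 < a) by (unfold a; apply Rdiv_lt_0_compat; lra).
  assert (Ea : a * (Rabs M + 1) = eps / 2) by (unfold a; field; lra).
  destruct (HK C_hilbert (@char_rep a n) (char_rep_unitary a n) Defs.C1) as [v [Hv Hinv]].
  - exists (a * Rabs M). rewrite hnorm_C1. split; [nra|].
    intros g Hg. eapply Rle_trans; [apply char_rep_move_C1|].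
    rewrite Rabs_pos_eq by lra. apply Rmult_le_compat_l; [lra|].
    pose proof (Hbounded g Hg). pose proof (Rle_abs M). lra.
  - destruct n as [|m]; [inversion Hn|].
    exact (Hv (char_rep_invariant_eq0 a m v ltac:(lra) Hinv)).
Qed.
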